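(* The coupled relation $(\mathrm{Id},\approx^n_A)$ is a call-by-name coupled logical bisimulation, where $\mathrm{Id}$ is the identity relation on $\Lambda^\bullet$. Conversely, if $(\mathcal{R}',\mathcal{R})$ is a call-by-name coupled logical bisimulation with $\mathcal{R}'\subseteq\mathcal{R}\cap\mathrm{Id}$, then $\mathcal{R}$ is an applicative bisimulation; in particular $\approx^n_2$ is an applicative bisimulation.
   Context: $\Lambda^\bullet$ is the set of closed $\lambda$-terms. Contexts are generated by $C::=x\mid[\cdot]\mid C\,C\mid\lambda x.C$, possibly with several holes numbered left to right; $C[\widetilde M]$ fills the $i$-th hole with $M_i$. For $\mathcal{R}\subseteq\Lambda^\bullet\times\Lambda^\bullet$, $\mathcal{R}^\star=\{(C[\widetilde M],C[\widetilde N]) : C\text{ a context},\ M_i\,\mathcal{R}\,N_i\ \forall i,\ C[\widetilde M],C[\widetilde N]\in\Lambda^\bullet\}$. Call-by-name reduction on closed terms: $MN\longrightarrow M'N$ if $M\longrightarrow M'$, and $(\lambda x.P)N\longrightarrow P[N/x]$; $\Longrightarrow$ is its reflexive transitive closure. A relation $\mathcal{R}\subseteq\Lambda^\bullet\times\Lambda^\bullet$ is an applicative bisimulation if $M\,\mathcal{R}\,N$ implies: whenever $M\Longrightarrow\lambda x.P$, then $N\Longrightarrow\lambda x.Q$ for some $Q$ with $P[W/x]\,\mathcal{R}\,Q[W/x]$ for all $W\in\Lambda^\bullet$, and conversely with $M,N$ exchanged; $\approx^n_A$ is the union of all applicative bisimulations. A coupled relation is a pair $(\mathcal{R}_1,\mathcal{R}_2)$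 of relations on $\Lambda^\bullet$ with $\mathcal{R}_1\subseteq\mathcal{R}_2$. It is a (call-by-name) coupled logical bisimulation if whenever $M\,\mathcal{R}_2\,N$: (1) if $M\longrightarrow M'$ then there is $N'$ with $N\Longrightarrow N'$ and $M'\,\mathcal{R}_2\,N'$; (2) if $M=\lambda x.M'$ then $N\Longrightarrow\lambda x.N'$ for some $N'$ and for all $P,Q\in\Lambda^\bullet$ with $P\,\mathcal{R}_1^\star\,Q$, $M'[P/x]\,\mathcal{R}_2\,N'[Q/x]$; (3) the converses of (1),(2) with $M$ and $N$ exchanged. $(\approx^n_1,\approx^n_2)$ is the componentwise union of all such bisimulations. *)

From Stdlib Require Import Arith Relations.

Inductive term : Type :=
| Var : nat -> term
| App : term -> term -> term
| Lam : term -> term.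

Fixpoint closed_at (k : nat) (M : term) : Prop :=
  match M with
  | Var n => n < k
  | App M1 M2 => closed_at k M1 /\ closed_at k M2
  | Lam M1 => closed_at (S k) M1
  end.

Definition closed (M : term) : Prop := closed_at 0 M.

(* subst k W M = M[W/k]; meant for closed W (no lifting needed),
   free indices above k are decremented (the binder is removed). *)
Fixpoint subst (k : nat) (W : term) (M : term) : term :=
  match M with
  | Var n => if Nat.eqb n k then W else if Nat.ltb k n then Var (n - 1) else Var n
  | App M1 M2 => App (subst k W M1) (subst k W M2)
  | Lam M1 => Lam (subst (S k) W M1)
  end.

(* P[W/x] where lambda x. P is the body P with bound index 0 *)
Definition subst0 (P W : term) : term := subst 0 W P.

Inductive step : term -> term -> Prop :=
| step_app : forall M M' N, step M M' -> step (App M N) (App M' N)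
| step_beta : forall P N, step (App (Lam P) N) (subst0 P N).

Definition steps : term -> term -> Prop := clos_refl_trans term step.

Definition rel := term -> term -> Prop.

Definition rel_on_closed (R : rel) : Prop :=
  forall M N, R M N -> closed M /\ closed N.

Definition Id : rel := fun M N => closed M /\ M = N.

(* multi-hole contexts, holes numbered left to right *)
Inductive ctx : Type :=
| CVar : nat -> ctx
| CHole : ctx
| CApp : ctx -> ctx -> ctx
| CLam : ctx -> ctx.

Fixpoint holes (C : ctx) : nat :=
  match C with
  | CVar _ => 0
  | CHole => 1
  | CApp C1 C2 => holes C1 + holes C2
  | CLam C1 => holes C1
  end.

(* fill C s: the i-th hole (from the left, starting at 0) receives s i *)
Fixpoint fill (C : ctx) (s : nat -> term) : term :=
  match C with
  | CVar n => Var n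
  | CHole => s 0
  | CApp C1 C2 => App (fill C1 s) (fill C2 (fun i => s (holes C1 + i)))
  | CLam C1 => Lam (fill C1 s)
  end.

Definition star (R : rel) : rel :=
  fun M N => exists (C : ctx) (Ms Ns : nat -> term),
    (forall i, i < holes C -> R (Ms i) (Ns i)) /\
    M = fill C Ms /\ N = fill C Ns /\ closed M /\ closed N.

Definition app_bisim (R : rel) : Prop :=
  rel_on_closed R /\
  forall M N, R M N ->
    (forall P, steps M (Lam P) ->
       exists Q, steps N (Lam Q) /\
         forall W, closed W -> R (subst0 P W) (subst0 Q W)) /\
    (forall Q, steps N (Lam Q) ->
       exists P, steps M (Lam P) /\
         forall W, closed W -> R (subst0 P W) (subst0 Q W)).

Definition app_bisimilar : rel := fun M N => exists R, app_bisim R /\ R M N.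

Definition coupled_logical_bisim (R1 R2 : rel) : Prop :=
  rel_on_closed R1 /\ rel_on_closed R2 /\
  (forall M N, R1 M N -> R2 M N) /\
  forall M N, R2 M N ->
    (forall M', step M M' -> exists N', steps N N' /\ R2 M' N') /\
    (forall M', M = Lam M' -> exists N', steps N (Lam N') /\
       forall P Q, star R1 P Q -> R2 (subst0 M' P) (subst0 N' Q)) /\
    (forall N', step N N' -> exists M', steps M M' /\ R2 M' N') /\
    (forall N', N = Lam N' -> exists M', steps M (Lam M') /\
       forall P Q, star R1 P Q -> R2 (subst0 M' P) (subst0 N' Q)).

Definition clb_approx1 : rel :=
  fun M N => exists R1 R2, coupled_logical_bisim R1 R2 /\ R1 M N.
Definition clb_approx2 : rel :=
  fun M N => exists R1 R2, coupled_logical_bisim R1 R2 /\ R2 M N.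

From Stdlib Require Import Arith Relations Lia.

(* Every coupled logical bisimulation is an applicative bisimulation: its
   clauses are those of an applicative bisimulation evaluated step by step,
   once one notes that [star R1] is reflexive on closed terms (fill a context
   without holes).  Conversely, applicative bisimilarity is closed under
   reduction because call-by-name reduction is deterministic, and [star Id]
   relates a term only to itself, so the logical clause for [(Id, ≈)] is just
   the applicative one. *)

Lemma closed_at_weaken M k k' : closed_at k M -> k <= k' -> closed_at k' M.
Proof.
  revert k k'; induction M as [n | M1 IH1 M2 IH2 | M1 IH]; simpl; intros k k' HM Hle.
  - lia.
  - destruct HM; split; eauto.
  - apply (IH (S k)); [assumption | lia].
Qed.

Lemma closed_at_subst M k W :
  closed_at (S k) M -> closed W -> closed_at k (subst k W M).
Proof.
  revert k; induction M as [n | M1 IH1 M2 IH2 | M1 IH]; simpl; intros k HM HW.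
  - destruct (Nat.eqb_spec n k).
    + apply (closed_at_weaken W 0); [assumption | lia].
    + destruct (Nat.ltb_spec k n); simpl; lia.
  - destruct HM; split; auto.
  - apply IH; assumption.
Qed.

Lemma closed_subst0 P W : closed (Lam P) -> closed W -> closed (subst0 P W).
Proof. apply closed_at_subst. Qed.

Lemma step_closed M M' : step M M' -> closed M -> closed M'.
Proof.
  unfold closed; induction 1 as [M M' N _ IH | P N]; simpl; intros [HM HN].
  - split; auto.
  - apply closed_subst0; assumption.
Qed.

Lemma steps_closed M M' : steps M M' -> closed M -> closed M'.
Proof. induction 1; eauto using step_closed. Qed.

Lemma step_deterministic M M1 M2 : step M M1 -> step M M2 -> M1 = M2.
Proof.
  intros H1; revert M2; induction H1 as [M M' N HM IH | P N]; intros M2 H2;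
    inversion H2; subst.
  - f_equal; auto.
  - inversion HM.
  - match goal with H : step (Lam _) _ |- _ => inversion H end.
  - reflexivity.
Qed.

Lemma steps_lam_of_reduct A B V : steps A B -> steps A (Lam V) -> steps B (Lam V).
Proof.
  intros HAB; apply clos_rt_rt1n in HAB.
  induction HAB as [A | A A1 B HA1 _ IH]; intros HAV; [assumption |].
  apply clos_rt_rt1n in HAV; inversion HAV as [| ? A2 HA2 HA2V]; subst.
  - inversion HA1.
  - apply IH; rewrite (step_deterministic _ _ _ HA1 HA2); apply clos_rt1n_rt; assumption.
Qed.

Fixpoint ctx_of_term (M : term) : ctx :=
  match M with
  | Var n => CVar n
  | App A B => CApp (ctx_of_term A) (ctx_of_term B)
  | Lam A => CLam (ctx_of_term A)
  end.

Lemma holes_ctx_of_term M : holes (ctx_of_term M) = 0.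
Proof. induction M; simpl; auto; rewrite IHM1, IHM2; reflexivity. Qed.

Lemma fill_ctx_of_term M s : fill (ctx_of_term M) s = M.
Proof. revert s; induction M; simpl; intros s; f_equal; auto. Qed.

Lemma star_refl R W : closed W -> star R W W.
Proof.
  intros HW; exists (ctx_of_term W), (fun _ => W), (fun _ => W).
  rewrite holes_ctx_of_term, fill_ctx_of_term; repeat split; auto; lia.
Qed.

Lemma fill_ext C s t : (forall i, i < holes C -> s i = t i) -> fill C s = fill C t.
Proof.
  revert s t; induction C as [n | | C1 IH1 C2 IH2 | C1 IH]; simpl; intros s t Hst.
  - reflexivity.
  - apply Hst; lia.
  - f_equal; [apply IH1 | apply IH2]; intros i Hi; apply Hst; lia.
  - f_equal; auto.
Qed.

Lemma star_Id_incl P Q : star Id P Q -> Id P Q.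
Proof.
  intros (C & Ms & Ns & HMN & -> & -> & HP & _); split; [assumption |].
  apply fill_ext; intros i Hi; apply HMN; assumption.
Qed.

Lemma app_bisim_Id : app_bisim Id.
Proof.
  split; [intros M N [HM <-]; auto |].
  intros M N [HM <-].
  assert (Hsubst : forall P W, steps M (Lam P) -> closed W -> Id (subst0 P W) (subst0 P W)).
  { intros P W HP HW; split; [| reflexivity].
    apply closed_subst0; [eapply steps_closed |]; eassumption. }
  split; intros P HP; exists P; split; auto.
Qed.

Definition red_closure (R : rel) : rel :=
  fun A B => exists A0 B0, R A0 B0 /\ steps A0 A /\ steps B0 B.

Lemma red_closure_incl (R : rel) M N : R M N -> red_closure R M N.
Proof. intros HR; exists M, N; repeat split; auto; apply rt_refl. Qed.

Lemma app_bisim_red_closure R : app_bisim R -> app_bisim (red_closure R).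
Proof.
  intros [Hc HR]; split.
  - intros A B (A0 & B0 & H0 & HA & HB); destruct (Hc _ _ H0).
    split; eapply steps_closed; eassumption.
  - intros A B (A0 & B0 & H0 & HA & HB); destruct (HR _ _ H0) as [Hl Hr]; split.
    + intros P HP; destruct (Hl P) as (Q & HQ & HW); [eapply rt_trans; eassumption |].
      exists Q; split; [eapply steps_lam_of_reduct; eassumption |].
      intros W HW'; apply red_closure_incl; auto.
    + intros Q HQ; destruct (Hr Q) as (P & HP & HW); [eapply rt_trans; eassumption |].
      exists P; split; [eapply steps_lam_of_reduct; eassumption |].
      intros W HW'; apply red_closure_incl; auto.
Qed.

Lemma app_bisimilar_step_l M M' N : app_bisimilar M N -> step M M' -> app_bisimilar M' N.
Proof.
  intros (R & HR & HMN) HM; exists (red_closure R); split.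
  - apply app_bisim_red_closure; assumption.
  - exists M, N; repeat split; [assumption | apply rt_step; assumption | apply rt_refl].
Qed.

Lemma app_bisimilar_step_r M N N' : app_bisimilar M N -> step N N' -> app_bisimilar M N'.
Proof.
  intros (R & HR & HMN) HN; exists (red_closure R); split.
  - apply app_bisim_red_closure; assumption.
  - exists M, N; repeat split; [assumption | apply rt_refl | apply rt_step; assumption].
Qed.

Lemma clb_Id_app_bisimilar : coupled_logical_bisim Id app_bisimilar.
Proof.
  split; [| split; [| split]].
  - intros M N [HM <-]; auto.
  - intros M N (R & [Hc _] & HR); auto.
  - intros M N HMN; exists Id; split; [exact app_bisim_Id | assumption].
  - intros M N HMN; split; [| split; [| split]].
    + intros M' HM'; exists N; split; [apply rt_refl | eapply app_bisimilar_step_l; eassumption].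
    + intros M' ->; destruct HMN as (R & [Hc HR] & HMN).
      destruct (proj1 (HR _ _ HMN) M' (rt_refl _ _ _)) as (Q & HQ & HW).
      exists Q; split; [assumption |].
      intros P0 Q0 HPQ; destruct (star_Id_incl _ _ HPQ) as [HP0 <-].
      exists R; split; [split | apply HW]; assumption.
    + intros N' HN'; exists M; split; [apply rt_refl | eapply app_bisimilar_step_r; eassumption].
    + intros N' ->; destruct HMN as (R & [Hc HR] & HMN).
      destruct (proj2 (HR _ _ HMN) N' (rt_refl _ _ _)) as (P & HP & HW).
      exists P; split; [assumption |].
      intros P0 Q0 HPQ; destruct (star_Id_incl _ _ HPQ) as [HP0 <-].
      exists R; split; [split | apply HW]; assumption.
Qed.

Lemma clb_eval_l R1 R2 : coupled_logical_bisim R1 R2 ->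
  forall M N P, R2 M N -> steps M (Lam P) ->
  exists Q, steps N (Lam Q) /\ forall W, closed W -> R2 (subst0 P W) (subst0 Q W).
Proof.
  intros (_ & _ & _ & Hb) M N P HMN HM; apply clos_rt_rt1n in HM; revert N HMN.
  remember (Lam P) as L eqn:EL; induction HM as [M | M M1 L HM1 _ IH]; intros N HMN; subst.
  - destruct (Hb _ _ HMN) as (_ & Hlam & _); destruct (Hlam P eq_refl) as (Q & HQ & HW).
    exists Q; split; [assumption |]; intros W HW'; apply HW, star_refl, HW'.
  - destruct (Hb _ _ HMN) as (Hstep & _); destruct (Hstep _ HM1) as (N1 & HN1 & HMN1).
    destruct (IH eq_refl N1 HMN1) as (Q & HQ & HW).
    exists Q; split; [eapply rt_trans |]; eassumption.
Qed.

Lemma clb_eval_r R1 R2 : coupled_logical_bisim R1 R2 ->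
  forall M N Q, R2 M N -> steps N (Lam Q) ->
  exists P, steps M (Lam P) /\ forall W, closed W -> R2 (subst0 P W) (subst0 Q W).
Proof.
  intros (_ & _ & _ & Hb) M N Q HMN HN; apply clos_rt_rt1n in HN; revert M HMN.
  remember (Lam Q) as L eqn:EL; induction HN as [N | N N1 L HN1 _ IH]; intros M HMN; subst.
  - destruct (Hb _ _ HMN) as (_ & _ & _ & Hlam); destruct (Hlam Q eq_refl) as (P & HP & HW).
    exists P; split; [assumption |]; intros W HW'; apply HW, star_refl, HW'.
  - destruct (Hb _ _ HMN) as (_ & _ & Hstep & _); destruct (Hstep _ HN1) as (M1 & HM1 & HMN1).
    destruct (IH eq_refl M1 HMN1) as (P & HP & HW).
    exists P; split; [eapply rt_trans |]; eassumption.
Qed.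

Lemma clb_app_bisim R1 R2 : coupled_logical_bisim R1 R2 -> app_bisim R2.
Proof.
  intros Hb; split; [apply Hb |].
  intros M N HMN; split; intros; [eapply clb_eval_l | eapply clb_eval_r]; eassumption.
Qed.

Lemma app_bisim_union (F : rel -> Prop) :
  (forall R, F R -> app_bisim R) -> app_bisim (fun M N => exists R, F R /\ R M N).
Proof.
  intros HF; split.
  - intros M N (R & HR & HMN); apply (HF R HR), HMN.
  - intros M N (R & HR & HMN); destruct (proj2 (HF R HR) _ _ HMN) as [Hl Hr]; split.
    + intros P HP; destruct (Hl P HP) as (Q & HQ & HW).
      exists Q; split; [| intros W HW'; exists R]; auto.
    + intros Q HQ; destruct (Hr Q HQ) as (P & HP & HW).
      exists P; split; [| intros W HW'; exists R]; auto.
Qed.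

Lemma app_bisim_iff (R S : rel) : (forall M N, R M N <-> S M N) -> app_bisim R -> app_bisim S.
Proof.
  intros HRS [Hc Hb]; split.
  - intros M N HMN; apply Hc, HRS, HMN.
  - intros M N HMN; destruct (Hb M N (proj2 (HRS M N) HMN)) as [Hl Hr]; split.
    + intros P HP; destruct (Hl P HP) as (Q & HQ & HW).
      exists Q; split; [| intros W HW'; apply HRS]; auto.
    + intros Q HQ; destruct (Hr Q HQ) as (P & HP & HW).
      exists P; split; [| intros W HW'; apply HRS]; auto.
Qed.

Lemma app_bisim_clb_approx2 : app_bisim clb_approx2.
Proof.
  apply (app_bisim_iff (fun M N => exists R, (exists R1, coupled_logical_bisim R1 R) /\ R M N)).
  - intros M N; split.
    + intros (R2 & (R1 & Hb) & HMN); exists R1, R2; auto.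
    + intros (R1 & R2 & Hb & HMN); exists R2; eauto.
  - apply app_bisim_union; intros R (R1 & Hb); exact (clb_app_bisim _ _ Hb).
Qed.

Theorem mainTheorem9 :
  coupled_logical_bisim Id app_bisimilar /\
  (forall R' R : rel, coupled_logical_bisim R' R ->
     (forall M N, R' M N -> R M N /\ Id M N) -> app_bisim R) /\
  app_bisim clb_approx2.
Proof.
  split; [exact clb_Id_app_bisimilar |]; split; [| exact app_bisim_clb_approx2].
  intros R' R Hb _; exact (clb_app_bisim _ _ Hb).
Qed.
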